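(* Let $\mathcal{X}=\{A\in\mathcal{M}_d: A=A^\dagger,\ \operatorname{tr}A=0\}$ with the basis consisting of $\sigma_x^{jk}=|j\rangle\langle k|+|k\rangle\langle j|$ and $\sigma_y^{jk}=-i(|j\rangle\langle k|-|k\rangle\langle j|)$ for $1\le j<k\le d$, and $\sigma_z^j=|j\rangle\langle j|-|j+1\rangle\langle j+1|$ for $j=1,\dots,d-1$, and let $\mathcal{V}=\{A\mapsto UAU^\dagger: U\in\mathcal{M}_d\text{ unitary}\}$. Then for every pair $B_1,B_2$ of these basis vectors there is $T\in\mathcal{V}$ with $T(B_1)=B_2$.
   Context: $\{|1\rangle,\dots,|d\rangle\}$ is the standard basis of $\mathbb{C}^d$. *)

From HB Require Import structures.
From mathcomp Require Import all_boot all_order all_algebra.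
From mathcomp Require Import sesquilinear spectral.
Set Implicit Arguments. Unset Strict Implicit. Unset Printing Implicit Defensive.
Import GRing.Theory Num.Theory.
Local Open Scope ring_scope.

(* Indices 1..d of the paper are 0..d-1 here ('I_d); |j><k| = delta_mx j k. *)
Section Basis.
Variables (C : numClosedFieldType) (d : nat).

Definition sigma_x (j k : 'I_d) : 'M[C]_d := delta_mx j k + delta_mx k j.
Definition sigma_y (j k : 'I_d) : 'M[C]_d :=
  (- 'i) *: (delta_mx j k - delta_mx k j).
(* sigma_z^j = |j><j| - |j+1><j+1|, with k the index j+1 *)
Definition sigma_z (j k : 'I_d) : 'M[C]_d := delta_mx j j - delta_mx k k.

Definition is_pauli_basis (B : 'M[C]_d) : Prop :=
  (exists j k : 'I_d, (j < k)%N /\ B = sigma_x j k) \/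
  (exists j k : 'I_d, (j < k)%N /\ B = sigma_y j k) \/
  (exists j k : 'I_d, val k = (val j).+1 /\ B = sigma_z j k).
End Basis.

From HB Require Import structures.
From mathcomp Require Import all_boot all_order all_algebra.
From mathcomp Require Import sesquilinear spectral fingroup perm.
From mathcomp Require Import ring.
Import GRing.Theory Num.Theory.
Local Open Scope ring_scope.
Local Open Scope sesquilinear_scope.

(* Unitary similarity is an equivalence relation, so it suffices to relate
   every basis vector to some sigma_x^{jk}.  Permutation matrices carry
   sigma_x^{jk} to any sigma_x^{j'k'}, and unitaries acting only on the plane
   spanned by |j> and |k>, namely diag(-i, 1) and (1 + i)/2 [[1, 1], [1, -1]],
   carry sigma_x^{jk} to sigma_y^{jk} and to sigma_z^{jk} respectively. *)

Section UnitarySimilarity.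
Context {C : numClosedFieldType} {n : nat}.
Implicit Types (A B D U V : 'M[C]_n) (j k : 'I_n).

Definition unitary_similar A B :=
  exists2 U : 'M[C]_n, U \is unitarymx & U *m A *m U^t* = B.

Lemma unitarymx1 : (1%:M : 'M[C]_n) \is unitarymx.
Proof. by apply/unitarymxP; rewrite trmx1 map_mx1 mulmx1. Qed.

Lemma unitary_similar_refl A : unitary_similar A A.
Proof. by exists 1%:M; rewrite ?unitarymx1 // trmx1 map_mx1 mul1mx mulmx1. Qed.

Lemma unitary_similar_sym {A B} : unitary_similar A B -> unitary_similar B A.
Proof.
move=> [U U_unitary <-]; exists (U^t*); first by rewrite trmxC_unitary.
rewrite trmxCK !mulmxA (mulmxKtV _ U_unitary) // -invmx_unitary //.
by rewrite mulVmx ?mul1mx ?unitarymx_unit.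
Qed.

Lemma unitary_similar_trans {A B D} :
  unitary_similar A B -> unitary_similar B D -> unitary_similar A D.
Proof.
move=> [U U_unitary <-] [V V_unitary <-]; exists (V *m U).
  exact: mul_unitarymx.
by rewrite trmx_mul map_mxM !mulmxA.
Qed.

Lemma conj_delta_mxE U V j k i l :
  (U *m delta_mx j k *m V^t*) i l = U i j * (V l k)^*.
Proof.
rewrite !mxE (bigD1 k) //= big1 ?addr0 => [|m /negbTE km]; last first.
  by rewrite mxE big1 ?mul0r // => m' _; rewrite mxE km andbF mulr0.
rewrite !mxE (bigD1 j) //= big1 ?addr0 => [|m /negbTE jm]; last first.
  by rewrite mxE jm mulr0.
by rewrite mxE !eqxx mulr1.
Qed.

Lemma conj_sigma_xE U j k i l :
  (U *m sigma_x C j k *m U^t*) i l = U i j * (U l k)^* + U i k * (U l j)^*.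
Proof. by rewrite /sigma_x mulmxDr mulmxDl mxE !conj_delta_mxE. Qed.

Lemma perm_mx_unitary (s : 'S_n) : perm_mx s \is @unitarymx C n n.
Proof.
have conj_perm_mx : (perm_mx s : 'M[C]_n)^t* = perm_mx (s^-1)%g.
  by rewrite -tr_perm_mx; apply/matrixP => i l; rewrite !mxE conjC_nat.
by apply/unitarymxP; rewrite conj_perm_mx -perm_mxM mulgV perm_mx1.
Qed.

Lemma conj_perm_delta_mx (s : 'S_n) j k :
  perm_mx s *m delta_mx j k *m (perm_mx s)^t* =
    delta_mx ((s^-1)%g j) ((s^-1)%g k) :> 'M[C]_n.
Proof.
apply/matrixP => i l; rewrite conj_delta_mxE !mxE conjC_nat -natrM.
by rewrite !(canF_eq (permK s)) mulnb.
Qed.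

Lemma sigma_x_similar_perm (s : 'S_n) j k :
  unitary_similar (sigma_x C j k) (sigma_x C ((s^-1)%g j) ((s^-1)%g k)).
Proof.
exists (perm_mx s); first exact: perm_mx_unitary.
by rewrite /sigma_x mulmxDr mulmxDl !conj_perm_delta_mx.
Qed.

Lemma sigma_x_similar {j k j' k'} :
  j != k -> j' != k' -> unitary_similar (sigma_x C j k) (sigma_x C j' k').
Proof.
move=> jk j'k'; pose k1 := tperm j j' k.
have j'k1 : j' != k1 by rewrite -{1}(tpermL j j') (inj_eq perm_inj).
have := sigma_x_similar_perm (tperm j j') j k; rewrite tpermV tpermL -/k1.
move/unitary_similar_trans; apply.
have := sigma_x_similar_perm (tperm k1 k') j' k1.
by rewrite tpermV tpermL tpermD // eq_sym.
Qed.

Section PlaneRotation.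
Variables (j k : 'I_n) (a b c e : C).
Hypothesis jk : j != k.

Let jkF : (j == k) = false. Proof. exact: negbTE. Qed.
Let kjF : (k == j) = false. Proof. by rewrite eq_sym jkF. Qed.

Definition plane_mx : 'M[C]_n := \matrix_(i, l)
  if i == j then (if l == j then a else if l == k then b else 0)
  else if i == k then (if l == j then c else if l == k then e else 0)
  else (i == l)%:R.

Variant plane_index_spec (x : 'I_n) : bool -> bool -> Prop :=
  | PlaneIndex1 of x = j : plane_index_spec x true false
  | PlaneIndex2 of x = k : plane_index_spec x false true
  | PlaneIndexOff of x != j & x != k : plane_index_spec x false false.

Lemma plane_indexP x : plane_index_spec x (x == j) (x == k).
Proof.
have [->|xj] := eqVneq x j; first by rewrite jkF; constructor.
by have [->|xk] := eqVneq x k; constructor.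
Qed.

Lemma mul_plane_mxE m (M : 'M[C]_(n, m)) i l :
  (plane_mx *m M) i l =
    if i == j then a * M j l + b * M k l
    else if i == k then c * M j l + e * M k l else M i l.
Proof.
rewrite mxE.
case: (plane_indexP i) => [->|->|/negbTE ij /negbTE ik].
- rewrite (bigD1 j) // (bigD1 k) 1?eq_sym //= big1 ?addr0 => [|h /andP[hk hj]].
    by rewrite !mxE !eqxx kjF.
  by rewrite mxE eqxx (negbTE hj) (negbTE hk) mul0r.
- rewrite (bigD1 j) // (bigD1 k) 1?eq_sym //= big1 ?addr0 => [|h /andP[hk hj]].
    by rewrite !mxE !eqxx kjF.
  by rewrite mxE eqxx kjF (negbTE hj) (negbTE hk) mul0r.
- rewrite (bigD1 i) //= big1 ?addr0 => [|h hi]; first by rewrite mxE ij ik eqxx mul1r.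
  by rewrite mxE ij ik eq_sym (negbTE hi) mul0r.
Qed.

Lemma plane_mx_unitary :
  a * a^* + b * b^* = 1 -> c * c^* + e * e^* = 1 -> a * c^* + b * e^* = 0 ->
  plane_mx \is unitarymx.
Proof.
move=> row1 row2 row12.
have row21 : c * a^* + e * b^* = 0.
  move/(congr1 Num.conj): row12.
  by rewrite rmorphD !rmorphM /= !conjCK conjC0 !(mulrC _^*).
apply/unitarymxP/matrixP => i l; rewrite mul_plane_mxE !mxE.
case: (plane_indexP i) => [->|->|ij ik]; case: (plane_indexP l) => [->|->|lj lk].
all: rewrite ?eqxx ?jkF ?kjF ?(negbTE ij) ?(negbTE ik) ?(negbTE lj) ?(negbTE lk).
all: rewrite ?conjC0 ?mulr0 ?addr0 ?conjC_nat 1?eq_sym ?(negbTE lj) ?(negbTE lk) //.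
Qed.

Lemma conj_plane_sigma_x :
  plane_mx *m sigma_x C j k *m plane_mx^t* =
      (a * b^* + b * a^*) *: delta_mx j j + (a * e^* + b * c^*) *: delta_mx j k
    + (c * b^* + e * a^*) *: delta_mx k j + (c * e^* + e * c^*) *: delta_mx k k.
Proof.
apply/matrixP => i l; rewrite conj_sigma_xE !mxE.
case: (plane_indexP i) => [_|_|_ _]; case: (plane_indexP l) => [_|_|_ _].
all: by rewrite ?eqxx ?kjF ?jkF /= ?conjC0 ?mulr0 ?mul0r ?mulr1 ?addr0 ?add0r.
Qed.

End PlaneRotation.

Lemma sigma_x_similar_y j k :
  j != k -> unitary_similar (sigma_x C j k) (sigma_y C j k).
Proof.
move=> jk; have normNi : - 'i * (- 'i)^* = 1 :> C.
  by rewrite rmorphN /= conjCi opprK mulNr -expr2 sqrCi opprK.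
exists (plane_mx j k (- 'i) 0 0 1).
  by apply: plane_mx_unitary; rewrite ?conjC0 ?conjC1 ?mulr0 ?addr0 ?add0r ?mulr1.
rewrite conj_plane_sigma_x // /sigma_y.
rewrite !(conjC0, conjC1, mulr0, mul0r, mulr1, mul1r, addr0, add0r, scale0r).
by rewrite scalerBr -scaleNr [(- _)^*]rmorphN /= conjCi.
Qed.

Lemma sigma_x_similar_z j k :
  j != k -> unitary_similar (sigma_x C j k) (sigma_z C j k).
Proof.
(* |w|^2 = 1/2 without taking a square root. *)
move=> jk; pose w : C := (1 + 'i) / 2.
have two_neq0 : (2 : C) != 0 by rewrite pnatr_eq0.
have normw : w * w^* = 2^-1.
  rewrite rmorphM /= fmorphV rmorphD /= rmorph1 conjCi rmorph_nat mulrACA -invfM.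
  by rewrite mulrDl mul1r mulrBr mulr1 -expr2 sqrCi subrKA opprK; field.
have halves : 2^-1 + 2^-1 = 1 :> C by field.
exists (plane_mx j k w w w (- w)).
  by apply: plane_mx_unitary; rewrite ?rmorphN /= ?mulrN ?mulNr ?opprK ?normw ?subrr.
rewrite conj_plane_sigma_x // /sigma_z rmorphN /= !(mulrN, mulNr) normw.
by rewrite addNr subrr -opprD halves !scale0r !addr0 scale1r scaleN1r.
Qed.

Lemma pauli_basis_similar_sigma_x B :
  is_pauli_basis B -> exists j k, j != k /\ unitary_similar (sigma_x C j k) B.
Proof.
have neq_of_lt j k : (j < k)%N -> j != k by move=> /ltn_eqF/negbT.
case=> [[j [k [/neq_of_lt jk ->]]]|[[j [k [/neq_of_lt jk ->]]]|[j [k [jk ->]]]]].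
- by exists j, k; split; last exact: unitary_similar_refl.
- by exists j, k; split; last exact: sigma_x_similar_y.
have {}jk : j != k by apply: neq_of_lt; rewrite jk.
by exists j, k; split; last exact: sigma_x_similar_z.
Qed.

End UnitarySimilarity.

Theorem lemma2 (C : numClosedFieldType) (d : nat) (B1 B2 : 'M[C]_d) :
  is_pauli_basis B1 -> is_pauli_basis B2 ->
  exists U : 'M[C]_d, U \is unitarymx /\ U *m B1 *m U ^t* = B2.
Proof.
move=> /pauli_basis_similar_sigma_x [j1 [k1 [jk1 sim1]]].
move=> /pauli_basis_similar_sigma_x [j2 [k2 [jk2 sim2]]].
have [U U_unitary UB1] : unitary_similar B1 B2.
  apply: unitary_similar_trans (unitary_similar_sym sim1) _.
  exact: unitary_similar_trans (sigma_x_similar jk1 jk2) sim2.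
by exists U.
Qed.
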